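(* Let $N\in\mathbb{N}$ and let $f(x)=\sum_{n=1}^N\alpha_nx^n\mathbbm{1}_{\{x<0\}}+\sum_{n=1}^N\beta_nx^n\mathbbm{1}_{\{x\ge0\}}$ for $x\in\mathbb{R}$, where the coefficients $\alpha_1,\dots,\alpha_N,\beta_1,\dots,\beta_N$ are drawn independently from a distribution absolutely continuous with respect to Lebesgue measure. Let $\eta>0$ and consider gradient descent $x_{t+1}=x_t-\eta f'_+(x_t)$. Suppose $f'_+(0)<0$ or $f'_-(0)<0$. Then, with probability $1$, there exist $a=a(\boldsymbol\alpha,\boldsymbol\beta)<0<b=b(\boldsymbol\alpha,\boldsymbol\beta)$ and a finite $\tilde t=\tilde t(\eta,\boldsymbol\alpha,\boldsymbol\beta)>0$ such that, with $\chi=[a,b]$: whenever $x_t\in\chi$, there exists $0<t'\le\tilde t$ with $x_{t+t'}\notin\chi$.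
   Context: Here $f'_+(x)=\lim_{h\to0^+}\frac{f(x+h)-f(x)}{h}$ and $f'_-(x)=\lim_{h\to0^+}\frac{f(x-h)-f(x)}{h}$ denote the one-sided directional derivatives of $f$ at $x$ in the directions $+1$ and $-1$, respectively. *)

From HB Require Import structures.
From mathcomp Require Import all_boot all_order all_algebra.
From mathcomp Require Import all_classical all_reals all_analysis.
Set Implicit Arguments. Unset Strict Implicit. Unset Printing Implicit Defensive.
Import Order.TTheory GRing.Theory Num.Theory.
Import numFieldNormedType.Exports.
Local Open Scope classical_set_scope.
Local Open Scope ring_scope.

(* f(x) = sum_{n=1}^N alpha_n x^n 1_{x<0} + sum_{n=1}^N beta_n x^n 1_{x>=0};
   alpha_n is (alpha (n-1)), i.e. index i : 'I_N stands for n = i+1. *)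
Definition pw_poly (R : realType) (N : nat) (alpha beta : 'I_N -> R) (x : R) : R :=
  (if x < 0 then \sum_(i < N) alpha i * x ^+ i.+1 else 0)
  + (if 0 <= x then \sum_(i < N) beta i * x ^+ i.+1 else 0).

(* One-sided directional derivative of f at x in direction v:
   lim_{h -> 0+} (f(x + h v) - f(x)) / h.
   f'_+(x) = dirder f x 1 and f'_-(x) = dirder f x (-1). *)
Definition dirder (R : realType) (f : R -> R) (x v : R) : R :=
  lim ((fun h : R => (f (x + h * v) - f x) / h) @ 0^'+).

(* Mutual independence of a finite family of real random variables:
   the product rule holds for every choice of Borel sets (taking B i = setT
   recovers every finite subfamily). *)
Definition mutually_independent d (T : measurableType d) (R : realType)
    (P : probability T R) (I : finType) (X : I -> T -> R) : Prop :=
  forall B : I -> set R, (forall i, measurable (B i)) ->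
    P (\bigcap_i (X i @^-1` B i)) = (\prod_(i : I) P (X i @^-1` B i))%E.

(* Almost surely the first-order coefficients alpha_1 and beta_1 are nonzero:
   each has an absolutely continuous law.  Then
   f'_+ is close to alpha_1 just left of 0 and to beta_1 on [0, b], so
   |f'_+| >= c > 0 on a small interval [a, b].  The hypothesis excludes
   exactly the valley alpha_1 < 0 < beta_1; in every other case the sign of
   f'_+ on [a, b] can only switch from + to - from left to right, so a
   gradient step never reverses the sign of the next step.  Hence an orbit
   staying in [a, b] moves monotonically by at least eta c per step, which is
   impossible for more than (b - a) / (eta c) steps. *)

From HB Require Import structures.
From mathcomp Require Import all_boot all_order all_algebra.
From mathcomp Require Import all_classical all_reals all_analysis.
From mathcomp Require Import lra.
Import Order.TTheory GRing.Theory Num.Theory.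
Import numFieldNormedType.Exports.
Local Open Scope classical_set_scope.
Local Open Scope ring_scope.
Set Implicit Arguments. Unset Strict Implicit. Unset Printing Implicit Defensive.

Section PowerSums.
Variables (R : realType) (N : nat).
Implicit Types (c : 'I_N -> R) (x v : R).

Definition powsum c x := \sum_(i < N) c i * x ^+ i.+1.
Definition powsum' c x := \sum_(i < N) c i * i.+1%:R * x ^+ i.

Lemma powsum0 c : powsum c 0 = 0.
Proof. by rewrite /powsum big1 // => i _; rewrite expr0n mulr0. Qed.

Lemma is_derive_powsum c x v : is_derive x v (powsum c) (powsum' c x * v).
Proof.
have -> : powsum c = \sum_(i < N) (fun y => c i * y ^+ i.+1).
  by rewrite fct_sumE.
rewrite /powsum' big_distrl /=; apply: is_derive_sum => i.
have Dpow : is_derive x v (fun y : R => y ^+ i.+1) (i.+1%:R *: x ^+ i *: v).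
  by apply: DeriveDef; [exact: exprn_derivable | rewrite exp_derive].
apply: is_derive_eq (is_deriveZ (c i) Dpow) _.
by rewrite !scalerA mulrA.
Qed.

Lemma continuous_powsum' c : continuous (powsum' c).
Proof.
apply: (continuous_big add_continuous) => i _ y.
by apply: cvgM; [exact: cvg_cst | exact: exprn_continuous].
Qed.

End PowerSums.

Lemma powsum'0 (R : realType) n (c : 'I_n.+1 -> R) : powsum' c 0 = c ord0.
Proof.
rewrite /powsum' big_ord_recl big1 ?addr0 => [|i _]; first by rewrite !mulr1.
by rewrite expr0n mulr0.
Qed.

Lemma dirder_near (R : realType) (f g : R -> R) x v :
  derivable g x v -> f x = g x ->
  (\forall h \near 0^'+, f (x + h * v) = g (x + h * v)) ->
  dirder f x v = 'D_v g x.
Proof.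
move=> dg fxE fE; apply: cvg_lim => //.
have dg_right : (fun h : R => h^-1 *: ((g \o shift x) (h *: v) - g x)) @ 0^'+
    --> 'D_v g x.
  apply: cvg_trans dg; apply: cvg_app; apply: within_subset => h /= h0.
  by rewrite gt_eqF.
apply: cvg_trans dg_right; apply: near_eq_cvg; near=> h.
rewrite /= fxE (near fE h) // [RHS]mulrC.
by congr (_ * (g _ - _)); exact: addrC.
Unshelve. all: by end_near.
Qed.

Section PiecewisePowerSum.
Variables (R : realType) (N : nat) (alpha beta : 'I_N -> R).
Let f := pw_poly alpha beta.

Lemma pw_poly_lt0 x : x < 0 -> f x = powsum alpha x.
Proof. by move=> x0; rewrite /f /pw_poly x0 (lt_geF x0) addr0. Qed.

Lemma pw_poly_ge0 x : 0 <= x -> f x = powsum beta x.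
Proof. by move=> x0; rewrite /f /pw_poly (le_gtF x0) x0 add0r. Qed.

Lemma dirder_pw_poly_lt0 x : x < 0 -> dirder f x 1 = powsum' alpha x.
Proof.
move=> x0; have [dP Dval] := is_derive_powsum alpha x 1.
rewrite (dirder_near dP) ?Dval ?mulr1 ?pw_poly_lt0 //; near=> h.
rewrite mulr1 pw_poly_lt0 // -ltrBrDl sub0r.
by near: h; apply: nbhs_right_lt; rewrite oppr_gt0.
Unshelve. all: by end_near.
Qed.

Lemma dirder_pw_poly_ge0 x : 0 <= x -> dirder f x 1 = powsum' beta x.
Proof.
move=> x0; have [dP Dval] := is_derive_powsum beta x 1.
rewrite (dirder_near dP) ?Dval ?mulr1 ?pw_poly_ge0 //; near=> h.
rewrite mulr1 pw_poly_ge0 //; apply/(addr_ge0 x0)/ltW.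
by near: h; exact: nbhs_right_gt.
Unshelve. all: by end_near.
Qed.

Lemma dirder_pw_poly_0N : dirder f 0 (-1) = - powsum' alpha 0.
Proof.
have [dP Dval] := is_derive_powsum alpha 0 (-1).
rewrite (dirder_near dP) ?Dval ?mulrN1 ?pw_poly_ge0 ?powsum0 //; near=> h.
rewrite pw_poly_lt0 // add0r mulrN1 oppr_lt0.
by near: h; apply: nbhs_right_gt.
Unshelve. all: by end_near.
Qed.

End PiecewisePowerSum.

Lemma dist_lt_half_norm (R : realFieldType) (u v : R) :
  `|u - v| < `|u| / 2 -> `|u| / 2 < `|v| /\ (0 < v) = (0 < u).
Proof.
case: (ltgtP u 0) => [u_lt0|u_gt0|->]; last by rewrite normr0 mul0r normr_lt0.
- rewrite (ltr0_norm u_lt0) ltr_norml => /andP[uv_gt uv_lt].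
  have v_lt0 : v < 0 by lra.
  by rewrite (ltr0_norm v_lt0) (lt_gtF v_lt0); split => //; lra.
- rewrite (gtr0_norm u_gt0) ltr_norml => /andP[uv_gt uv_lt].
  have v_gt0 : 0 < v by lra.
  by rewrite (gtr0_norm v_gt0) v_gt0; split => //; lra.
Qed.

Section GradientDescent.
Variables (R : realType) (eta : R).
Hypothesis eta_gt0 : 0 < eta.
Implicit Types (g : R -> R) (x : nat -> R) (a b c : R).

Definition gd_orbit g x := forall t, x t.+1 = x t - eta * g (x t).

Lemma gd_orbit_reflect g x :
  gd_orbit g x -> gd_orbit (fun y => - g (- y)) (fun t => - x t).
Proof. by move=> gx t /=; rewrite gx opprK; lra. Qed.

Lemma gd_drift_left g a b c x t n : 0 < c ->
  {in `[a, b], forall y, c <= `|g y|} ->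
  {in `[a, b] &, forall y y', y <= y' -> 0 < g y' -> 0 < g y} ->
  gd_orbit g x -> 0 < g (x t) ->
  (forall k, (k <= n)%N -> x (t + k)%N \in `[a, b]) ->
  x (t + n)%N <= x t - n%:R * (eta * c).
Proof.
move=> c_gt0 g_ge g_sign gx gxt_gt0.
elim: n => [|n IH] x_in; first by rewrite addn0 mul0r subr0.
have {IH} IH := IH (fun k kn => x_in k (leqW kn)).
have xt_in : x t \in `[a, b] by have := x_in 0%N (leq0n _); rewrite addn0.
have xtn_in := x_in n (leqnSn n).
have c_le : c <= g (x (t + n)%N).
  have gxtn_gt0 : 0 < g (x (t + n)%N).
    apply: g_sign gxt_gt0 => //.
    by apply: le_trans IH _; rewrite gerBl mulr_ge0 // ltW ?mulr_gt0.
  by rewrite -(gtr0_norm gxtn_gt0) g_ge.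
have : eta * c <= eta * g (x (t + n)%N) by rewrite ler_wpM2l // ltW.
by rewrite addnS gx -addn1 natrD; lra.
Qed.

Lemma gd_drift_right g a b c x t n : 0 < c ->
  {in `[a, b], forall y, c <= `|g y|} ->
  {in `[a, b] &, forall y y', y <= y' -> 0 < g y' -> 0 < g y} ->
  gd_orbit g x -> g (x t) < 0 ->
  (forall k, (k <= n)%N -> x (t + k)%N \in `[a, b]) ->
  x t + n%:R * (eta * c) <= x (t + n)%N.
Proof.
move=> c_gt0 g_ge g_sign gx gxt_lt0 x_in.
have := @gd_drift_left (fun y => - g (- y)) (- b) (- a) c (fun t => - x t) t n.
rewrite opprK oppr_gt0 => /(_ c_gt0) drift.
suff : - x (t + n)%N <= - x t - n%:R * (eta * c) by lra.
apply: drift => //.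
- by move=> y; rewrite -oppr_itvcc normrN => /g_ge.
- move=> y y'; rewrite -!oppr_itvcc !oppr_gt0 => yin y'in yy' gy'.
  rewrite ltNge; apply/negP => gy_ge0.
  have gy_gt0 : 0 < g (- y).
    rewrite lt_neqAle gy_ge0 andbT eq_sym -normr_gt0.
    by rewrite (lt_le_trans c_gt0) ?g_ge.
  have := g_sign _ _ y'in yin; rewrite lerN2 => /(_ yy' gy_gt0).
  by rewrite ltNge (ltW gy').
- exact: gd_orbit_reflect.
- by move=> k /x_in; rewrite -oppr_itvcc opprK.
Qed.

Lemma gd_escape g a b c : 0 < c ->
  {in `[a, b], forall y, c <= `|g y|} ->
  {in `[a, b] &, forall y y', y <= y' -> 0 < g y' -> 0 < g y} ->
  exists tt : nat, (0 < tt)%N /\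
    forall x, gd_orbit g x -> forall t, a <= x t <= b ->
      exists t' : nat, (0 < t' <= tt)%N /\ ~ (a <= x (t + t') <= b).
Proof.
move=> c_gt0 g_ge g_sign.
have ec_gt0 : 0 < eta * c by rewrite mulr_gt0.
pose tt := (Num.truncn ((b - a) / (eta * c))).+1.
have tt_large : b - a < tt%:R * (eta * c) by rewrite -ltr_pdivrMr // truncnS_gt.
exists tt; split => // x gx t xt_in.
apply: contrapT => stays.
have x_in k : (k <= tt)%N -> x (t + k)%N \in `[a, b].
  case: k => [|k] k_le; first by rewrite addn0 in_itv.
  by rewrite in_itv; apply: contrapT => x_out; apply: stays; exists k.+1.
move: (x_in tt (leqnn tt)) (xt_in).
rewrite in_itv /= => /andP[xa xb] /andP[xta xtb].
have : g (x t) != 0.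
  by rewrite -normr_gt0 (lt_le_trans c_gt0) // g_ge // in_itv /= xta xtb.
case: ltgtP => // [g_lt0|g_gt0] _.
- have := gd_drift_right c_gt0 g_ge g_sign gx g_lt0 x_in; lra.
- have := gd_drift_left c_gt0 g_ge g_sign gx g_gt0 x_in; lra.
Qed.

Lemma gd_escape_kink (g hl hr : R -> R) :
  {for 0, continuous hl} -> {for 0, continuous hr} ->
  hl 0 != 0 -> hr 0 != 0 -> hr 0 < 0 \/ 0 < hl 0 ->
  (forall y, y < 0 -> g y = hl y) -> (forall y, 0 <= y -> g y = hr y) ->
  exists a b : R, a < 0 < b /\
    exists tt : nat, (0 < tt)%N /\
      forall x, gd_orbit g x -> forall t, a <= x t <= b ->
        exists t' : nat, (0 < t' <= tt)%N /\ ~ (a <= x (t + t') <= b).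
Proof.
move=> hl_cont hr_cont hl0_neq0 hr0_neq0 no_valley g_left g_right.
have [d d_gt0 d_near] : exists2 d : R, 0 < d & forall y, `|y| < d ->
    `|hl 0 - hl y| < `|hl 0| / 2 /\ `|hr 0 - hr y| < `|hr 0| / 2.
  have : \forall y \near 0,
      `|hl 0 - hl y| < `|hl 0| / 2 /\ `|hr 0 - hr y| < `|hr 0| / 2.
    near=> y; split; near: y.
    - by move/cvgrPdist_lt: hl_cont; apply; rewrite divr_gt0 ?normr_gt0.
    - by move/cvgrPdist_lt: hr_cont; apply; rewrite divr_gt0 ?normr_gt0.
  move=> /nbhs_ballP[d /= d_gt0 d_ball]; exists d => // y y_lt.
  by apply: d_ball; rewrite /ball /= sub0r normrN.
pose c := Num.min `|hl 0| `|hr 0| / 2.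
have g_near y : `|y| < d ->
    c < `|g y| /\ (0 < g y) = (if y < 0 then 0 < hl 0 else 0 < hr 0).
  move=> /d_near[/dist_lt_half_norm[hl_ge hl_sign]].
  move=> /dist_lt_half_norm[hr_ge hr_sign].
  case: (ltP y 0) => [y_lt0|y_ge0].
  - rewrite g_left // hl_sign; split => //.
    by apply: le_lt_trans hl_ge; rewrite ler_pM2r ?ge_min ?lexx.
  - rewrite g_right // hr_sign; split => //.
    by apply: le_lt_trans hr_ge; rewrite ler_pM2r ?ge_min ?lexx ?orbT.
have small y : y \in `[- (d / 2), d / 2] -> `|y| < d.
  by rewrite in_itv /= ltr_norml => /andP[? ?]; apply/andP; split; lra.
exists (- (d / 2)), (d / 2); split; first by rewrite oppr_lt0 andbb divr_gt0.
apply: (@gd_escape _ _ _ c).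
- by rewrite divr_gt0 // lt_min !normr_gt0 hl0_neq0 hr0_neq0.
- by move=> y /small /g_near[/ltW].
move=> y y' /small /g_near[_ ->] /small /g_near[_ ->] yy'.
case: (ltP y 0) => y0; case: (ltP y' 0) => y'0 //; last lra.
by case: no_valley => [/lt_gtF ->|].
Unshelve. all: by end_near.
Qed.

End GradientDescent.

Lemma ae_neq_abscont d (T : measurableType d) (R : realType)
    (P : {measure set T -> \bar R}) (mu : {measure set R -> \bar R})
    (X : T -> R) (r : R) :
  mu `<< lebesgue_measure -> measurable_fun setT X ->
  (forall A, measurable A -> P (X @^-1` A) = mu A) ->
  {ae P, forall w, X w != r}.
Proof.
move=> mu_ac mX lawX; exists (X @^-1` [set r]); split.
- by rewrite -[X @^-1` _]setTI; apply: mX.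
- rewrite lawX //; apply/measure0_null_setP => //; apply: mu_ac.
  exact/measure0_null_setP/lebesgue_measure_set1.
- by move=> w /negP; rewrite negbK => /eqP.
Qed.

Theorem proposition2 (R : realType) (d : measure_display) (T : measurableType d)
  (P : probability T R) (N : nat) (mu : probability R R)
  (X : 'I_N + 'I_N -> T -> R) :
  mu `<< lebesgue_measure ->
  (forall k, measurable_fun setT (X k)) ->
  (forall k (A : set R), measurable A -> P (X k @^-1` A) = mu A) ->
  mutually_independent P X ->
  forall eta : R, 0 < eta ->
  {ae P, forall w,
    (dirder (pw_poly (fun i => X (inl i) w) (fun i => X (inr i) w)) 0 1 < 0
     \/ dirder (pw_poly (fun i => X (inl i) w) (fun i => X (inr i) w)) 0 (-1) < 0) ->
    exists a b : R, a < 0 < b /\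
    exists tt : nat, (0 < tt)%N /\
      forall x : nat -> R,
        (forall t, x t.+1 = x t - eta *
           dirder (pw_poly (fun i => X (inl i) w) (fun i => X (inr i) w)) (x t) 1) ->
        forall t, a <= x t <= b ->
          exists t' : nat, (0 < t' <= tt)%N /\ ~ (a <= x (t + t') <= b)}.
Proof.
move=> mu_ac mX lawX _ eta eta_gt0.
case: N X mX lawX => [|n] X mX lawX.
  apply: aeW => w; rewrite dirder_pw_poly_ge0 // dirder_pw_poly_0N.
  by rewrite /powsum' !big_ord0 oppr0 ltxx; case.
have X_neq0 k : {ae P, forall w, X k w != 0}.
  exact: ae_neq_abscont mu_ac (mX k) (lawX k).
apply: filterS2 (X_neq0 (inl ord0)) (X_neq0 (inr ord0)).
move=> w alpha1_neq0 beta1_neq0 slope0.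
set alpha := fun i => X (inl i) w; set beta := fun i => X (inr i) w.
apply: (gd_escape_kink (g := fun y => dirder (pw_poly alpha beta) y 1) eta_gt0
  (@continuous_powsum' _ _ alpha 0) (@continuous_powsum' _ _ beta 0));
  rewrite ?powsum'0 //.
- move: slope0; rewrite dirder_pw_poly_ge0 // dirder_pw_poly_0N !powsum'0.
  by rewrite oppr_lt0; case; [left | right].
- exact: dirder_pw_poly_lt0.
- exact: dirder_pw_poly_ge0.
Qed.
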